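(* Let $\mathcal{K}$ be a continuous unitary representation of $\overline{\mathfrak{S}}_\infty$ in a Hilbert space $\mathcal{H}$, let $n,k\ge 1$ be integers, let $P_n$ be the weak-operator limit of $\mathcal{K}({}^n\sigma_m)$ as $m\to\infty$, and let $O_k$ be the weak-operator limit of $\mathcal{K}((k\;\;N))$ as $N\to\infty$. Let $\mathfrak{S}(k,n,\infty)$ be the subgroup of $\overline{\mathfrak{S}}_\infty$ generated by the transposition $(k\;\;n+1)$ and the subgroup $\mathfrak{S}(n,\infty)$. Then $O_kP_n$ is the self-adjoint (orthogonal) projection onto the subspace $\{\eta\in\mathcal{H}: \mathcal{K}(s)\eta=\eta \text{ for all } s\in\mathfrak{S}(k,n,\infty)\}$. In particular, $O_nP_n=P_{n-1}$.
   Context: $\overline{\mathfrak{S}}_\infty$ is the group of all bijections of $\mathbb{N}$, with the Polish topology in which the subgroups $\mathfrak{S}(n,\infty)=\{s: s(j)=j \text{ for } j=1,\dots,n\}$ form a fundamental system of neighborhoods of the identity; continuity of $\mathcal{K}$ means $\lim_{n\to\infty}\sup_{s\in\mathfrak{S}(n,\infty)}\|\mathcal{K}(s)\eta-\eta\|=0$ for each $\eta\in\mathcal{H}$. $(k\;j)$ denotes the transposition of $k$ and $j$, and ${}^n\sigma_m=(n+1\;\;n+m+1)(n+2\;\;n+m+2)\cdots(n+m\;\;n+2m)$. The weak-operator limits $P_n$ and $O_k$ exist and are self-adjoint projections; $P_{n-1}$ is defined analogously with $n-1$ in place of $n$. *)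

From mathcomp Require Import all_boot all_algebra reals complex.
Set Implicit Arguments. Unset Strict Implicit. Unset Printing Implicit Defensive.
Import GRing.Theory Num.Theory.
Local Open Scope ring_scope.
Local Open Scope complex_scope.

Section Defs.
Variable R : realType.
Local Notation C := R[i].
Variable H : lmodType C.
Variable ip : H -> H -> C.   (* inner product, linear in the first argument *)

Definition hnorm (x : H) : C := sqrtC (ip x x).

Definition cauchy_seq (u : nat -> H) : Prop :=
  forall eps : R, 0 < eps -> exists N : nat, forall m p : nat,
    (N <= m)%N -> (N <= p)%N -> hnorm (u m - u p) < eps%:C.

Definition converges_to (u : nat -> H) (l : H) : Prop :=
  forall eps : R, 0 < eps -> exists N : nat, forall m : nat,
    (N <= m)%N -> hnorm (u m - l) < eps%:C.

Record is_hilbert : Prop := IsHilbert {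
  ip_linl : forall (a : C) (x y z : H), ip (a *: x + y) z = a * ip x z + ip y z;
  ip_conj : forall x y : H, ip y x = (ip x y)^*;
  ip_pos  : forall x : H, 0 <= ip x x;
  ip_def  : forall x : H, ip x x = 0 -> x = 0;
  ip_complete : forall u : nat -> H, cauchy_seq u -> exists l, converges_to u l
}.

(* Elements of \bar S_infty: bijections of N = {1,2,...}, encoded as
   bijections of nat fixing the unused point 0. *)
Definition is_perm (s : nat -> nat) : Prop := bijective s /\ s 0%N = 0%N.

(* s belongs to S(n,infty): fixes 1..n *)
Definition fixes_upto (n : nat) (s : nat -> nat) : Prop :=
  forall j : nat, (1 <= j <= n)%N -> s j = j.

Record cont_unitary_rep (K : (nat -> nat) -> H -> H) : Prop := IsRep {
  rep_lin : forall s, is_perm s -> forall (a : C) (x y : H),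
      K s (a *: x + y) = a *: K s x + K s y;
  rep_unitary : forall s, is_perm s -> forall x y : H, ip (K s x) (K s y) = ip x y;
  rep_id : forall x : H, K id x = x;
  rep_mul : forall s t, is_perm s -> is_perm t -> forall x : H,
      K (s \o t) x = K s (K t x);
  rep_cont : forall (eta : H) (eps : R), 0 < eps -> exists N : nat,
      forall n : nat, (N <= n)%N -> forall s, is_perm s -> fixes_upto n s ->
        hnorm (K s eta - eta) < eps%:C
}.

Definition weak_limit (T : nat -> H -> H) (P : H -> H) : Prop :=
  forall (x y : H) (eps : R), 0 < eps -> exists M : nat, forall m : nat,
    (M <= m)%N -> `|ip (T m x) y - ip (P x) y| < eps%:C.

Definition is_orth_proj (T : H -> H) (V : H -> Prop) : Prop :=
  (forall x, T (T x) = T x) /\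
  (forall y, V y <-> exists x, T x = y) /\
  (forall x y, ip (T x) y = ip x (T y)).

End Defs.

Definition transp (k j : nat) : nat -> nat :=
  fun x => if x == k then j else if x == j then k else x.

(* ^n sigma_m = (n+1 n+m+1)(n+2 n+m+2)...(n+m n+2m) *)
Definition nsigma (n m : nat) : nat -> nat :=
  fun x => if (n < x <= n + m)%N then (x + m)%N
           else if (n + m < x <= n + 2 * m)%N then (x - m)%N else x.

Inductive in_Sknk (k n : nat) : (nat -> nat) -> Prop :=
| Sknk_transp : in_Sknk k n (transp k n.+1)
| Sknk_fix : forall s, is_perm s -> fixes_upto n s -> in_Sknk k n s
| Sknk_comp : forall s t, in_Sknk k n s -> in_Sknk k n t -> in_Sknk k n (s \o t)
| Sknk_inv : forall s g, in_Sknk k n s -> cancel s g -> cancel g s -> in_Sknk k n g.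

Definition fixed_space (R : realType) (H : lmodType R[i])
  (K : (nat -> nat) -> H -> H) (k n : nat) : H -> Prop :=
  fun eta => forall s, in_Sknk k n s -> K s eta = eta.

(* Write V for the vectors fixed by S(k,n,oo).  P_n and O_k are self-adjoint, being weak
   limits of involutive unitaries, and they fix V because the permutations whose limits
   they are eventually lie in S(k,n,oo); hence x - O_k P_n x is orthogonal to V.
   Conversely O_k P_n x lies in V.  First, P_n x is S(n,oo)-invariant: conjugation by
   ^n sigma_m moves a transposition (a b) with a, b > n into S(m,oo), where continuity makes
   it act almost trivially, and every element of S(n,oo) agrees on 1..N with a finite
   product of such transpositions.  Then O_k preserves S(n,oo)-invariance and adds
   invariance under (k n+1), since conjugating (k N) by these permutations only reindexes
   the sequence N |-> (k N).  As
   S(n,n,oo) = S(n-1,oo), the vector P_(n-1) x has the same characterisation as O_n P_n x. *)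

From mathcomp Require Import all_boot all_order all_algebra reals complex boolp.
From mathcomp Require Import zify ring lra.
Import Order.TTheory GRing.Theory Num.Theory.
Set Implicit Arguments. Unset Strict Implicit. Unset Printing Implicit Defensive.
Local Open Scope ring_scope.

Lemma is_perm_comp s t : is_perm s -> is_perm t -> is_perm (s \o t).
Proof. by move=> [bs s0] [bt t0]; split; [exact: bij_comp | rewrite /= t0 s0]. Qed.

Lemma is_perm_can s g : is_perm s -> cancel s g -> cancel g s -> is_perm g.
Proof. by move=> [_ s0] sg gs; split; [exists s | rewrite -{1}s0 sg]. Qed.

Lemma is_perm_inj s : is_perm s -> injective s.
Proof. by move=> [[g sg _] _]; exact: can_inj sg. Qed.

Lemma fixes_upto_gt j s x : is_perm s -> fixes_upto j s -> (j < x)%N -> (j < s x)%N.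
Proof.
move=> s_perm sj jx; rewrite ltnNge; apply/negP => sxj.
have [sx0|sx_gt0] := posnP (s x).
  by move: jx; rewrite (is_perm_inj s_perm (etrans sx0 (esym s_perm.2))).
have /(is_perm_inj s_perm) sxx : s (s x) = s x by apply: sj; rewrite sx_gt0 sxj.
by move: jx; rewrite -sxx ltnNge sxj.
Qed.

Definition tends_to_infty (phi : nat -> nat) :=
  forall M, exists N0, forall N, (N0 <= N)%N -> (M <= phi N)%N.

Lemma tends_to_infty_perm s : is_perm s -> tends_to_infty s.
Proof.
move=> [[g sg gs] _]; elim=> [|M [N0 hN0]]; first by exists 0%N.
exists (maxn N0 (g M).+1) => N; rewrite geq_max => /andP [N0N gMN].
rewrite ltn_neqAle hN0 // andbT; apply/eqP => sN.
by move: gMN; rewrite sN sg ltnn.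
Qed.

Lemma transp_l a b : transp a b a = b.
Proof. by rewrite /transp eqxx. Qed.

Lemma transp_r a b : transp a b b = a.
Proof. by rewrite /transp eqxx; case: eqP. Qed.

Lemma transp_id a b x : x != a -> x != b -> transp a b x = x.
Proof. by move=> /negPf xa /negPf xb; rewrite /transp xa xb. Qed.

Lemma transpK a b : involutive (transp a b).
Proof.
move=> x; have [->|xa] := eqVneq x a; first by rewrite transp_l transp_r.
have [->|xb] := eqVneq x b; first by rewrite transp_r transp_l.
by rewrite !transp_id.
Qed.

Lemma is_perm_transp a b : (0 < a)%N -> (0 < b)%N -> is_perm (transp a b).
Proof.
move=> a_gt0 b_gt0; split; first by exists (transp a b); exact: transpK.
by rewrite transp_id //; apply/eqP; lia.
Qed.

Lemma transp_conj s a b : injective s ->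
  s \o transp a b =1 transp (s a) (s b) \o s.
Proof.
by move=> s_inj x; rewrite /= /transp !(inj_eq s_inj); case: eqP => // _; case: eqP.
Qed.

Lemma fixes_upto_transp j a b : (j < a)%N -> (j < b)%N -> fixes_upto j (transp a b).
Proof. by move=> ja jb i /andP[_ ij]; apply: transp_id; apply/eqP; lia. Qed.

Lemma nsigmaK j m : involutive (nsigma j m).
Proof. by move=> x; rewrite /nsigma; do ?[case: ifP => /=]; lia. Qed.

Lemma is_perm_nsigma j m : is_perm (nsigma j m).
Proof.
split; first by exists (nsigma j m); exact: nsigmaK.
by rewrite /nsigma !ltn0.
Qed.

Lemma fixes_upto_nsigma j m : fixes_upto j (nsigma j m).
Proof. by move=> i ij; rewrite /nsigma; do ?[case: ifP => /=]; lia. Qed.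

Lemma nsigma_shift j m a : (j < a <= j + m)%N -> nsigma j m (a + m) = a.
Proof. by move=> ja; rewrite /nsigma; do ?[case: ifP => /=]; lia. Qed.

Inductive transp_word (j : nat) : (nat -> nat) -> Prop :=
| TWordId : transp_word j id
| TWordCons a b p : (j < a)%N -> (j < b)%N -> transp_word j p ->
    transp_word j (transp a b \o p).

Lemma transp_word_perm j p : transp_word j p -> is_perm p /\ fixes_upto j p.
Proof.
elim=> [|a b {}p ja jb _ [p_perm pj]].
  by split=> //; split=> //; exists id.
split; first by apply: is_perm_comp p_perm; apply: is_perm_transp; lia.
by move=> i ij /=; rewrite pj // (fixes_upto_transp ja jb).
Qed.

Lemma transp_word_approx j s L : is_perm s -> fixes_upto j s ->
  exists2 p, transp_word j p & forall i, (i <= L)%N -> p i = s i.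
Proof.
move=> s_perm sj; elim: L => [|L [p pw ps]].
  by exists id => [|i]; [constructor | rewrite leqn0 => /eqP ->; rewrite s_perm.2].
have [pL|pL] := eqVneq (p L.+1) (s L.+1).
  by exists p => // i; rewrite leq_eqVlt => /predU1P[->|]; last exact: ps.
have [p_perm pj] := transp_word_perm pw.
have jL : (j < L.+1)%N.
  by rewrite ltnNge; apply: contra_neqN pL => Lj; rewrite pj ?sj.
exists (transp (p L.+1) (s L.+1) \o p) => [|i].
  by constructor; rewrite // fixes_upto_gt.
rewrite leq_eqVlt => /predU1P[->|iL] /=; first exact: transp_l.
rewrite ltnS in iL; rewrite (ps i iL) transp_id //; apply/eqP.
  by rewrite -(ps i iL) => /(is_perm_inj p_perm) ei; rewrite ei ltnn in iL.
by move=> /(is_perm_inj s_perm) ei; rewrite ei ltnn in iL.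
Qed.

Lemma in_Sknk_perm k n s : (0 < k)%N -> in_Sknk k n s -> is_perm s.
Proof.
move=> k_gt0; elim=> {s} [||s t _ + _|s g _ + sg gs].
- by apply: is_perm_transp.
- by [].
- exact: is_perm_comp.
- by move=> s_perm; exact: is_perm_can s_perm sg gs.
Qed.

Lemma in_Sknk_transp k n N : (0 < k)%N -> (n < N)%N -> in_Sknk k n (transp k N).
Proof.
move=> k_gt0 nN; have [nk|kn] := ltnP n k.
  by apply: Sknk_fix; [apply: is_perm_transp | apply: fixes_upto_transp]; lia.
have [->|Nn1] := eqVneq N n.+1; first exact: Sknk_transp.
have u_perm : is_perm (transp N n.+1) by apply: is_perm_transp; lia.
have u_fix : fixes_upto n (transp N n.+1) by apply: fixes_upto_transp; lia.
have -> : transp k N = (transp N n.+1 \o transp k n.+1) \o transp N n.+1.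
  apply: funext => x /=.
  have /= -> := transp_conj k n.+1 (is_perm_inj u_perm) (transp N n.+1 x).
  by rewrite transpK transp_r (@transp_id N n.+1 k) //; apply/eqP; lia.
apply: Sknk_comp; last exact: Sknk_fix.
by apply: Sknk_comp; [exact: Sknk_fix | exact: Sknk_transp].
Qed.

Lemma in_Snn_fixes_upto_pred n s : (0 < n)%N -> is_perm s -> fixes_upto n.-1 s ->
  in_Sknk n n s.
Proof.
move=> n_gt0 s_perm sn1.
have [sn|sn] := eqVneq (s n) n.
  apply: Sknk_fix => // i /andP[i_gt0 i_le].
  have [->|ni] := eqVneq i n; first exact: sn.
  by apply: sn1; lia.
have nsn : (n < s n)%N.
  have : (n.-1 < s n)%N by apply: fixes_upto_gt; rewrite ?ltn_predL.
  by move: sn => /eqP; lia.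
have t_perm : is_perm (transp n (s n)) by apply: is_perm_transp; lia.
have -> : s = transp n (s n) \o (transp n (s n) \o s).
  by apply: funext => x /=; rewrite transpK.
apply: Sknk_comp; first exact: in_Sknk_transp.
apply: Sknk_fix; first exact: is_perm_comp.
move=> i /andP[i_gt0 i_le] /=; have [->|ni] := eqVneq i n; first exact: transp_r.
by rewrite (sn1 i) ?transp_id //; apply/eqP; lia.
Qed.

Section ComplexLimits.
Variable R : realType.
Local Notation C := R[i].
Local Open Scope complex_scope.

Definition cvgC (u : nat -> C) (l : C) : Prop :=
  forall e : R, 0 < e -> exists M, forall m, (M <= m)%N -> `|u m - l| < e%:C.

Lemma eqC_small (X Y : C) : (forall e : R, 0 < e -> `|X - Y| < e%:C) -> X = Y.
Proof.
move=> small; apply/eqP; rewrite -subr_eq0 -normr_eq0.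
have /complex_realP[d dE] := normr_real (X - Y).
have d_ge0 : 0 <= d by rewrite -ler0c -dE.
have [d_gt0|d_le0] := ltrP 0 d; first by have := small d d_gt0; rewrite dE ltxx.
by rewrite dE (_ : d = 0) //; apply/eqP; rewrite eq_le d_le0.
Qed.

Lemma ltC_add_half (a b : C) (e : R) :
  `|a| < (e / 2)%:C -> `|b| < (e / 2)%:C -> `|a + b| < e%:C.
Proof.
move=> ha hb; apply: le_lt_trans (ler_normD _ _) _.
have -> : e%:C = (e / 2)%:C + (e / 2)%:C by rewrite -rmorphD /=; congr _%:C; field.
exact: ltrD.
Qed.

Lemma cvgC_unique u X Y : cvgC u X -> cvgC u Y -> X = Y.
Proof.
move=> uX uY; apply: eqC_small => e e_gt0.
have e2_gt0 : 0 < e / 2 by lra.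
have [M1 hM1] := uX _ e2_gt0; have [M2 hM2] := uY _ e2_gt0.
have -> : X - Y = (X - u (maxn M1 M2)) + (u (maxn M1 M2) - Y) by ring.
by apply: ltC_add_half; [rewrite distrC hM1 ?leq_maxl | rewrite hM2 ?leq_maxr].
Qed.

Lemma cvgC_near u v X : cvgC u X ->
  (forall e : R, 0 < e -> exists M, forall m, (M <= m)%N -> `|v m - u m| < e%:C) ->
  cvgC v X.
Proof.
move=> uX vu e e_gt0.
have e2_gt0 : 0 < e / 2 by lra.
have [M1 hM1] := uX _ e2_gt0; have [M2 hM2] := vu _ e2_gt0.
exists (maxn M1 M2) => m; rewrite geq_max => /andP[M1m M2m].
have -> : v m - X = (v m - u m) + (u m - X) by ring.
by apply: ltC_add_half; [apply: hM2 | apply: hM1].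
Qed.

Lemma cvgC_eventually u v X : cvgC u X ->
  (exists M, forall m, (M <= m)%N -> u m = v m) -> cvgC v X.
Proof.
move=> uX [M uv]; apply: cvgC_near uX _ => e e_gt0.
by exists M => m Mm; rewrite uv // subrr normr0 ltcR.
Qed.

Lemma cvgC_cst c : cvgC (fun=> c) c.
Proof. by move=> e e_gt0; exists 0%N => m _; rewrite subrr normr0 ltcR. Qed.

Lemma cvgC_conj u X : cvgC u X -> cvgC (fun m => (u m)^*) X^*.
Proof.
move=> uX e /uX[M hM]; exists M => m /hM.
by rewrite -rmorphB /= norm_conjC.
Qed.

Lemma cvgC_comp u X phi : cvgC u X -> tends_to_infty phi -> cvgC (u \o phi) X.
Proof.
move=> uX phi_infty e /uX[M hM]; have [N0 hN0] := phi_infty M.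
by exists N0 => N /hN0 /hM.
Qed.

End ComplexLimits.

Section Hilbert.
Variable R : realType.
Local Notation C := R[i].
Variable H : lmodType C.
Variable ip : H -> H -> C.
Hypothesis hH : is_hilbert ip.
Local Open Scope complex_scope.

Lemma ip0l z : ip 0 z = 0.
Proof.
have := ip_linl hH 1 0 0 z; rewrite scale1r addr0 mul1r => ip0E.
by apply: (addrI (ip 0 z)); rewrite addr0 -ip0E.
Qed.

Lemma ipZl a x z : ip (a *: x) z = a * ip x z.
Proof. by have := ip_linl hH a x 0 z; rewrite addr0 ip0l addr0. Qed.

Lemma ipBl x y z : ip (x - y) z = ip x z - ip y z.
Proof. by rewrite addrC -scaleN1r (ip_linl hH) mulN1r addrC. Qed.

Lemma ipBr x y z : ip z (x - y) = ip z x - ip z y.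
Proof. by rewrite (ip_conj hH) ipBl rmorphB /= -!(ip_conj hH). Qed.

Lemma ipZr a x z : ip z (a *: x) = a^* * ip z x.
Proof. by rewrite (ip_conj hH) ipZl rmorphM /= -(ip_conj hH). Qed.

Lemma ip0r z : ip z 0 = 0.
Proof. by rewrite -(subrr z) ipBr subrr. Qed.

Lemma ipl_inj a b : (forall y, ip a y = ip b y) -> a = b.
Proof.
by move=> ab; apply/eqP; rewrite -subr_eq0; apply/eqP/(ip_def hH); rewrite ipBl ab subrr.
Qed.

Lemma hnorm_ge0 x : 0 <= hnorm ip x.
Proof. by rewrite /hnorm sqrtC_ge0 (ip_pos hH). Qed.

Lemma hnorm_sqr x : hnorm ip x ^+ 2 = ip x x.
Proof. by rewrite /hnorm sqrtCK. Qed.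

Lemma cauchy_schwarz_sqr u w : `|ip u w| ^+ 2 <= ip u u * ip w w.
Proof.
have [w0|w_neq0] := eqVneq (ip w w) 0.
  by rewrite (ip_def hH w0) ip0r ip0l normr0 expr0n mulr0.
have w_gt0 : 0 < ip w w by rewrite lt0r w_neq0 (ip_pos hH).
set c := ip u w / ip w w.
have : 0 <= ip u u - ip u w * (ip u w)^* / ip w w.
  suff -> : ip u u - ip u w * (ip u w)^* / ip w w = ip (u - c *: w) (u - c *: w).
    exact: ip_pos.
  rewrite ipBl !ipBr !ipZl !ipZr [ip w u](ip_conj hH) rmorphM /= fmorphV /=.
  have -> : Num.conj (ip w w) = ip w w := esym (ip_conj hH w w).
  have -> : Num.conj (ip u w) = (ip u w)^* := erefl.
  by rewrite /c; field.
by rewrite subr_ge0 ler_pdivrMr // normCK.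
Qed.

Lemma cauchy_schwarz u w : `|ip u w| <= hnorm ip u * hnorm ip w.
Proof.
rewrite -(@ler_pXn2r _ 2) ?qualifE /= ?mulr_ge0 ?hnorm_ge0 //.
by rewrite exprMn !hnorm_sqr cauchy_schwarz_sqr.
Qed.

Lemma hnorm_small_eq0 x : (forall e : R, 0 < e -> hnorm ip x < e%:C) -> x = 0.
Proof.
move=> small; apply: (ip_def hH); rewrite -hnorm_sqr.
suff -> : hnorm ip x = 0 by rewrite expr0n.
by apply: eqC_small => e /small; rewrite subr0 ger0_norm ?hnorm_ge0.
Qed.

Lemma ip_small y (e : R) : 0 < e ->
  exists2 d : R, 0 < d & forall u, hnorm ip u < d%:C -> `|ip u y| < e%:C.
Proof.
move=> e_gt0; have /complex_realP[r rE] := ger0_real (hnorm_ge0 y).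
have r_ge0 : 0 <= r by rewrite -ler0c -rE hnorm_ge0.
have d_gt0 : 0 < e / (r + 1) by apply: divr_gt0; lra.
exists (e / (r + 1)) => // u u_small.
apply: le_lt_trans (cauchy_schwarz u y) _; rewrite rE.
apply: le_lt_trans (_ : _ <= (e / (r + 1))%:C * r%:C) _.
  by apply: ler_wpM2r; [rewrite ler0c | exact: ltW].
rewrite -rmorphM ltcR (_ : e / (r + 1) * r = e - e / (r + 1)); first lra.
by field; lra.
Qed.

Lemma weak_limit_cvg T Q x y : weak_limit ip T Q ->
  cvgC (fun m => ip (T m x) y) (ip (Q x) y).
Proof. by move=> TQ; apply: TQ. Qed.

Lemma weak_limit_fixed T Q v : weak_limit ip T Q ->
  (exists M, forall m, (M <= m)%N -> T m v = v) -> Q v = v.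
Proof.
move=> TQ [M Tv]; apply: ipl_inj => y; apply: cvgC_unique (weak_limit_cvg v y TQ) _.
by apply: cvgC_eventually (cvgC_cst _) _; exists M => m /Tv ->.
Qed.

Definition selfadjoint (T : H -> H) := forall x y, ip (T x) y = ip x (T y).

Lemma weak_limit_selfadjoint T Q : weak_limit ip T Q ->
  (exists M, forall m, (M <= m)%N -> selfadjoint (T m)) -> selfadjoint Q.
Proof.
move=> TQ [M Tsa] x y; rewrite [RHS](ip_conj hH).
apply: cvgC_unique (weak_limit_cvg x y TQ) _.
apply: cvgC_eventually (cvgC_conj (weak_limit_cvg y x TQ)) _.
by exists M => m /Tsa Tm_sa; rewrite Tm_sa -(ip_conj hH).
Qed.

Lemma perp_of_adjoint T T' x v : (forall x y, ip (T x) y = ip x (T' y)) ->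
  T' v = v -> ip (x - T x) v = 0.
Proof. by move=> TT' T'v; rewrite ipBl TT' T'v subrr. Qed.

Section Projection.
Variable V : H -> Prop.
Hypothesis V_sub : forall u w, V u -> V w -> V (u - w).

Lemma perp_unique x u w : V u -> V w ->
  (forall v, V v -> ip (x - u) v = 0) -> (forall v, V v -> ip (x - w) v = 0) -> u = w.
Proof.
move=> Vu Vw xu_perp xw_perp; apply/eqP; rewrite -subr_eq0; apply/eqP/(ip_def hH).
have uwE : u - w = (x - w) - (x - u) by rewrite [RHS]addrC opprB -addrA addKr.
by rewrite {1}uwE ipBl xw_perp ?xu_perp ?subrr //; apply: V_sub.
Qed.

Lemma is_orth_proj_perp Q : (forall x, V (Q x)) ->
  (forall x v, V v -> ip (x - Q x) v = 0) -> is_orth_proj ip Q V.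
Proof.
move=> VQ Q_perp.
have Q_id v : V v -> Q v = v.
  move=> Vv; apply: perp_unique (Q_perp v) _ => // u _.
  by rewrite subrr ip0l.
have QQ x y : ip (Q x) y = ip (Q x) (Q y).
  by apply/eqP; rewrite -subr_eq0 -ipBr (ip_conj hH) Q_perp ?rmorph0.
split=> [x | ]; first exact/Q_id/VQ.
split=> [y | x y]; first by split=> [Vy | [x <-]]; [exists y; exact: Q_id | exact: VQ].
by rewrite QQ (ip_conj hH (Q y)) -QQ -(ip_conj hH).
Qed.

End Projection.

End Hilbert.

Section Representation.
Variable R : realType.
Variable H : lmodType R[i].
Variable ip : H -> H -> R[i].
Variable K : (nat -> nat) -> H -> H.
Hypothesis hH : is_hilbert ip.
Hypothesis hK : cont_unitary_rep ip K.

Definition tail_fixed n v := forall s, is_perm s -> fixes_upto n s -> K s v = v.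

Lemma rep_ext s t x : s =1 t -> K s x = K t x.
Proof. by move=> /funext->. Qed.

Lemma repB s x y : is_perm s -> K s (x - y) = K s x - K s y.
Proof. by move=> s_perm; rewrite addrC -scaleN1r (rep_lin hK) // scaleN1r addrC. Qed.

Lemma rep_can s g y : is_perm s -> is_perm g -> cancel g s -> K s (K g y) = y.
Proof. by move=> s_perm g_perm gK; rewrite -(rep_mul hK) // (rep_ext _ gK) (rep_id hK). Qed.

Lemma rep_adj s g x y : is_perm s -> is_perm g -> cancel g s ->
  ip (K s x) y = ip x (K g y).
Proof.
by move=> s_perm g_perm gK; rewrite -{1}(rep_can y s_perm g_perm gK) (rep_unitary hK).
Qed.

Lemma rep_selfadjoint s : is_perm s -> involutive s -> selfadjoint ip (K s).
Proof. by move=> s_perm sK x y; apply: rep_adj. Qed.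

Lemma hnorm_rep s x : is_perm s -> hnorm ip (K s x) = hnorm ip x.
Proof. by move=> s_perm; rewrite /hnorm (rep_unitary hK). Qed.

Lemma fixed_spaceB k n : (0 < k)%N -> forall u w,
  fixed_space K k n u -> fixed_space K k n w -> fixed_space K k n (u - w).
Proof.
move=> k_gt0 u w Vu Vw s sG.
by rewrite repB ?Vu ?Vw //; exact: (in_Sknk_perm k_gt0 sG).
Qed.

Lemma fixed_space_gen k n w : (0 < k)%N ->
  tail_fixed n w -> K (transp k n.+1) w = w -> fixed_space K k n w.
Proof.
move=> k_gt0 Sw tw s; elim=> {s} [|s|s t sG sw tG tw'|s g sG sw sg gs].
- exact: tw.
- exact: Sw.
- have [s_perm t_perm] := (in_Sknk_perm k_gt0 sG, in_Sknk_perm k_gt0 tG).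
  by rewrite (rep_mul hK) ?tw' ?sw.
- have s_perm := in_Sknk_perm k_gt0 sG.
  by rewrite -[in LHS]sw rep_can //; exact: is_perm_can sg gs.
Qed.

Lemma transp_word_fixed j p z : transp_word j p ->
  (forall a b, (j < a)%N -> (j < b)%N -> K (transp a b) z = z) -> K p z = z.
Proof.
move=> pw tz; elim: pw => [|a b {}p ja jb pw pz]; first exact: (rep_id hK).
have [p_perm _] := transp_word_perm pw.
by rewrite (rep_mul hK) ?pz ?tz //; apply: is_perm_transp; lia.
Qed.

Lemma tail_fixed_of_transp j z :
  (forall a b, (j < a)%N -> (j < b)%N -> K (transp a b) z = z) -> tail_fixed j z.
Proof.
move=> tz s s_perm sj; apply/eqP; rewrite -subr_eq0; apply/eqP.
apply: (hnorm_small_eq0 hH) => e /(rep_cont hK z)[N zN].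
have [p pw ps] := transp_word_approx N s_perm sj.
have [[p_perm _] pz] := (transp_word_perm pw, transp_word_fixed pw tz).
have [[g pg gp] _] := p_perm; have g_perm := is_perm_can p_perm pg gp.
have gs_perm : is_perm (g \o s) by exact: is_perm_comp.
have gsN : fixes_upto N (g \o s) by move=> i /andP[_ iN] /=; rewrite -ps ?pg.
(* [p] agrees with [s] up to [N], so [s] is [p] times a permutation fixing [1..N] *)
rewrite (rep_ext z (_ : s =1 p \o (g \o s))); last by move=> i /=; rewrite gp.
by rewrite (rep_mul hK) // -{2}pz -repB // hnorm_rep // (zN N).
Qed.

Lemma nsigma_limit_transp_fixed j Pj x a b :
  weak_limit ip (fun m => K (nsigma j m)) Pj -> (j < a)%N -> (j < b)%N ->
  K (transp a b) (Pj x) = Pj x.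
Proof.
move=> Pj_lim ja jb; have t_perm : is_perm (transp a b) by apply: is_perm_transp; lia.
apply: (ipl_inj hH) => y; rewrite (rep_selfadjoint t_perm (transpK a b)).
apply: cvgC_unique (weak_limit_cvg x (K (transp a b) y) Pj_lim) _.
apply: cvgC_near (weak_limit_cvg x y Pj_lim) _ => e /(ip_small hH y)[d d_gt0 small].
have [N xN] := rep_cont hK x d_gt0.
exists (maxn N (maxn a b)) => m; rewrite !geq_max => /and3P[Nm am bm].
have s_perm := is_perm_nsigma j m.
have t'_perm : is_perm (transp (a + m) (b + m)) by apply: is_perm_transp; lia.
(* [nsigma j m] conjugates [transp a b] into a transposition fixing [1..m] *)
have conj : transp a b \o nsigma j m =1 nsigma j m \o transp (a + m) (b + m).
  by move=> z; rewrite (transp_conj _ _ (is_perm_inj s_perm)) /= !nsigma_shift //; lia.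
rewrite -(rep_selfadjoint t_perm (transpK a b)) -(rep_mul hK) // (rep_ext _ conj).
rewrite (rep_mul hK) // -(ipBl hH) -repB //; apply: small.
rewrite hnorm_rep // (xN m) //; apply: fixes_upto_transp; lia.
Qed.

Lemma nsigma_limit_tail_fixed j Pj x :
  weak_limit ip (fun m => K (nsigma j m)) Pj -> tail_fixed j (Pj x).
Proof.
by move=> Pj_lim; apply: tail_fixed_of_transp => a b; apply: nsigma_limit_transp_fixed.
Qed.

Section TranspLimit.
Variables (k : nat) (Ok : H -> H) (xi : H).
Hypothesis k_gt0 : (0 < k)%N.
Hypothesis Ok_lim : weak_limit ip (fun N => K (transp k N)) Ok.

Lemma transp_limit_fixed u phi : is_perm u -> tends_to_infty phi ->
  (exists N0, forall N, (N0 <= N)%N -> exists2 w, is_perm w /\ K w xi = xi &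
     u \o transp k N =1 transp k (phi N) \o w) ->
  K u (Ok xi) = Ok xi.
Proof.
(* [ip (K u (Ok xi)) y] is the limit of [ip (K (u \o transp k N) xi) y], which is
   eventually [ip (K (transp k (phi N)) xi) y], a reindexing of the sequence
   converging to [ip (Ok xi) y]. *)
move=> u_perm phi_infty [N0 uw].
have [[g ug gu] _] := u_perm; have g_perm := is_perm_can u_perm ug gu.
apply: (ipl_inj hH) => y; rewrite (rep_adj _ _ u_perm g_perm gu).
apply: cvgC_unique (weak_limit_cvg xi (K g y) Ok_lim) _.
apply: cvgC_eventually (cvgC_comp (weak_limit_cvg xi y Ok_lim) phi_infty) _.
have [N1 phiN1] := phi_infty 1%N.
exists (maxn 1 (maxn N0 N1)) => N; rewrite !geq_max => /and3P[N_gt0 N0N N1N] /=.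
have [w [w_perm wxi] uwE] := uw N N0N.
have kN_perm : is_perm (transp k N) by exact: is_perm_transp.
have kphiN_perm : is_perm (transp k (phi N)) by apply: is_perm_transp; rewrite ?phiN1.
rewrite -(rep_adj _ _ u_perm g_perm gu) -(rep_mul hK) //.
by rewrite (rep_ext _ uwE) (rep_mul hK) ?wxi.
Qed.

Section TailFixed.
Variable n : nat.
Hypothesis xi_fixed : tail_fixed n xi.

Lemma transp_limit_fixed_upto s : (k <= n)%N -> is_perm s -> fixes_upto n s ->
  K s (Ok xi) = Ok xi.
Proof.
move=> kn s_perm sn; apply: (transp_limit_fixed s_perm (tends_to_infty_perm s_perm)).
exists 0%N => N _; exists s; first by split=> //; exact: xi_fixed.
by move=> z; rewrite [LHS](transp_conj _ _ (is_perm_inj s_perm)) /= (sn k) ?k_gt0.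
Qed.

Lemma transp_limit_fixed_next : (k <= n)%N -> K (transp k n.+1) (Ok xi) = Ok xi.
Proof.
move=> kn; apply: transp_limit_fixed (_ : tends_to_infty id) _.
- by apply: is_perm_transp.
- by move=> M; exists M.
exists n.+2 => N nN.
have [kN_perm Nn_perm] : is_perm (transp k N) /\ is_perm (transp N n.+1).
  by split; apply: is_perm_transp; lia.
exists (transp N n.+1).
  by split=> //; apply: xi_fixed => //; apply: fixes_upto_transp; lia.
move=> z; rewrite [RHS](transp_conj _ _ (is_perm_inj kN_perm)) /= transp_r.
by rewrite (@transp_id k N n.+1) //; apply/eqP; lia.
Qed.

Lemma transp_limit_fixed_space : fixed_space K k n (Ok xi).
Proof.
have [kn|nk] := leqP k n.
  apply: fixed_space_gen => //; first by move=> s; apply: transp_limit_fixed_upto.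
  exact: transp_limit_fixed_next.
have -> : Ok xi = xi.
  apply: (weak_limit_fixed hH) Ok_lim _; exists k.+1 => N kN.
  by apply: xi_fixed; [apply: is_perm_transp | apply: fixes_upto_transp]; lia.
apply: fixed_space_gen => //.
by apply: xi_fixed; [apply: is_perm_transp | apply: fixes_upto_transp]; lia.
Qed.

End TailFixed.
End TranspLimit.

End Representation.

Section Limits.
Variable R : realType.
Variable H : lmodType R[i].
Variable ip : H -> H -> R[i].
Variable K : (nat -> nat) -> H -> H.
Variables P O : nat -> H -> H.
Hypothesis hH : is_hilbert ip.
Hypothesis hK : cont_unitary_rep ip K.
Hypothesis P_lim : forall j, weak_limit ip (fun m => K (nsigma j m)) (P j).
Hypothesis O_lim : forall j, (1 <= j)%N -> weak_limit ip (fun N => K (transp j N)) (O j).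

Lemma P_selfadjoint j : selfadjoint ip (P j).
Proof.
apply: (weak_limit_selfadjoint hH) (P_lim j) _; exists 0%N => m _.
exact: (rep_selfadjoint hK (is_perm_nsigma j m) (nsigmaK j m)).
Qed.

Lemma O_selfadjoint k : (0 < k)%N -> selfadjoint ip (O k).
Proof.
move=> k_gt0; apply: (weak_limit_selfadjoint hH) (O_lim k_gt0) _; exists 1%N => N N_gt0.
exact: (rep_selfadjoint hK (is_perm_transp k_gt0 N_gt0) (transpK k N)).
Qed.

Lemma P_tail_fixed_id j v : tail_fixed K j v -> P j v = v.
Proof.
move=> v_fixed; apply: (weak_limit_fixed hH) (P_lim j) _; exists 0%N => m _.
exact/v_fixed/fixes_upto_nsigma/is_perm_nsigma.
Qed.

Lemma P_fixed_space_id k n v : fixed_space K k n v -> P n v = v.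
Proof. by move=> Vv; apply: P_tail_fixed_id => s s_perm sn; apply: Vv; exact: Sknk_fix. Qed.

Lemma O_fixed_space_id k n v : (0 < k)%N -> fixed_space K k n v -> O k v = v.
Proof.
move=> k_gt0 Vv; apply: (weak_limit_fixed hH) (O_lim k_gt0) _; exists n.+1 => N nN.
by apply: Vv; exact: in_Sknk_transp.
Qed.

Lemma OP_fixed_space k n x : (0 < k)%N -> fixed_space K k n (O k (P n x)).
Proof.
move=> k_gt0; apply: (transp_limit_fixed_space hH hK k_gt0 (O_lim k_gt0)).
exact: (nsigma_limit_tail_fixed hH hK).
Qed.

Lemma OP_perp k n x v : (0 < k)%N -> fixed_space K k n v -> ip (x - O k (P n x)) v = 0.
Proof.
move=> k_gt0 Vv.
apply: (perp_of_adjoint hH (T := fun y => O k (P n y)) (T' := fun y => P n (O k y))).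
  by move=> y z; rewrite O_selfadjoint ?P_selfadjoint.
by rewrite /= (O_fixed_space_id k_gt0 Vv) (P_fixed_space_id Vv).
Qed.

Lemma OP_orth_proj k n : (0 < k)%N ->
  is_orth_proj ip (fun x => O k (P n x)) (fixed_space K k n).
Proof.
move=> k_gt0; apply: (is_orth_proj_perp hH (fixed_spaceB hK k_gt0)) => [x|x v].
- exact: OP_fixed_space.
- exact: OP_perp.
Qed.

Lemma fixed_space_diagP n v : (0 < n)%N -> fixed_space K n n v <-> tail_fixed K n.-1 v.
Proof.
move=> n_gt0; split=> [Vv s s_perm sn1 | v_fixed].
  by apply: Vv; exact: in_Snn_fixes_upto_pred.
apply: (fixed_space_gen hK) => // [s s_perm sn|].
  by apply: v_fixed => // i /andP[i_gt0 i_lt]; apply: sn; lia.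
by apply: v_fixed; [apply: is_perm_transp | apply: fixes_upto_transp]; lia.
Qed.

Lemma OP_diag n x : (0 < n)%N -> O n (P n x) = P n.-1 x.
Proof.
move=> n_gt0.
apply: (perp_unique hH (fixed_spaceB hK n_gt0) (x := x)).
- exact: OP_fixed_space.
- by apply/fixed_space_diagP => //; exact: (nsigma_limit_tail_fixed hH hK).
- by move=> v; exact: OP_perp.
move=> v /(fixed_space_diagP v n_gt0) v_fixed.
apply: (perp_of_adjoint hH _ (P_selfadjoint n.-1)).
exact: P_tail_fixed_id.
Qed.

End Limits.

Theorem lemma6 (R : realType) (H : lmodType R[i]) (ip : H -> H -> R[i])
  (K : (nat -> nat) -> H -> H) (P O : nat -> H -> H) (n k : nat) :
  is_hilbert ip ->
  cont_unitary_rep ip K ->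
  (forall j : nat, weak_limit ip (fun m => K (nsigma j m)) (P j)) ->
  (forall j : nat, (1 <= j)%N -> weak_limit ip (fun N => K (transp j N)) (O j)) ->
  (1 <= n)%N -> (1 <= k)%N ->
  is_orth_proj ip (fun x => O k (P n x)) (fixed_space K k n) /\
  (forall x : H, O n (P n x) = P n.-1 x).
Proof.
move=> hH hK P_lim O_lim n_gt0 k_gt0; split.
- exact: (OP_orth_proj hH hK P_lim O_lim n k_gt0).
- by move=> x; exact: (OP_diag hH hK P_lim O_lim x n_gt0).
Qed.
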